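(* Let $(\mathbf A,\perp,\{\mathsf{t},\mathsf{f}\})$ be an $\mathfrak{N}_w^1$-model. For all $x,y,z\in A$: $x\otimes y\precsim z$ iff $x\precsim y\supset z$. Consequently, $(A,\precsim,\otimes,\supset,{}^{*})$ is a partially ordered commutative involutive residuated groupoid.
   Context: A weak $\mathcal{N}$-algebra is an algebra $(A,\otimes,\circ,{}^{*})$ of type $(2,2,1)$ with $\otimes,\circ$ commutative (not necessarily associative), $x^{**}=x$, and $(x\otimes y)\circ z=(x\otimes z)\circ y$. Term operations: $x\Rightarrow y:=(x\circ y^{*})^{*}$, $x\Leftrightarrow y:=(x\Rightarrow y)\otimes(y\Rightarrow x)$, $x\not\Leftrightarrow y:=(x\Leftrightarrow y)^{*}$, $x\not\Leftrightarrow y\not\Leftrightarrow z:=((x\not\Leftrightarrow y)\otimes(x\not\Leftrightarrow z))\otimes(y\not\Leftrightarrow z)$, $x\oplus y:=(x^{*}\otimes y^{*})^{*}$, $x\supset y:=x^{*}\oplus y$. With $\mathsf{t}\ne\mathsf{f}$ symbols not in $A$, $\overline A=A\cup\{\mathsf{t},\mathsf{f}\}$, an $\mathfrak{N}_w$-model is $(\mathbf A,\perp,\{\mathsf{t},\mathsf{f}\})$, $\mathbf A$ a weak $\mathcal{N}$-algebra, $\perp\subseteq\overline A\times\overline A$, such that for all $x,y,z\in A$: (a) $x\perp x^{*}$; (b) $x\perp y^{*}$ and $y\perp x^{*}$ imply $x=y$; (c) $x\perp y$ iff $x\circ y\perp\mathsf{t}$; (d) $x\perp\mathsf{t}$ iff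 $x^{*}\perp\mathsf{f}$; (e) $x\perp\mathsf{f}$ and $y\perp\mathsf{f}$ iff $x\otimes y\perp\mathsf{f}$; (f) $(x\circ y^{*})^{*}\perp(x\circ y)^{*}$; (g) $x\perp y$ and $x\perp\mathsf{f}$ imply $y\perp\mathsf{t}$; (h) $(x\not\Leftrightarrow y\not\Leftrightarrow z)\perp((x\Rightarrow y)\Rightarrow((y\Rightarrow z)\Rightarrow(x\Rightarrow z)))^{*}$. An $\mathfrak{N}_w^1$-model is an $\mathfrak{N}_w$-model such that for all $x,y,z\in A$: $x\perp\mathsf{f}$ implies $x\oplus y\perp\mathsf{f}$; and $x\perp y^{*}$, $y\perp z^{*}$ imply $x\perp z^{*}$. On $A$ define $x\precsim y$ iff $x\perp y^{*}$. A partially ordered commutative involutive residuated groupoid is a structure $(A,\leq,\otimes,\supset,{}^{*})$ where $(A,\otimes)$ is a commutative groupoid, $(A,\leq)$ is a poset, ${}^{*}$ is an antitone involution ($x^{**}=x$ and $x\leq y$ implies $y^{*}\leq x^{*}$), and $x\otimes y\leq z$ iff $x\leq y\supset z$ for all $x,y,z$. *)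

Set Implicit Arguments.

Definition weak_N_algebra (A : Type) (otimes circ : A -> A -> A) (star : A -> A) : Prop :=
  (forall x y, otimes x y = otimes y x) /\
  (forall x y, circ x y = circ y x) /\
  (forall x, star (star x) = x) /\
  (forall x y z, circ (otimes x y) z = circ (otimes x z) y).

Section Terms.
Variables (A : Type) (otimes circ : A -> A -> A) (star : A -> A).

Definition impl (x y : A) : A := star (circ x (star y)).
Definition biimpl (x y : A) : A := otimes (impl x y) (impl y x).
Definition nbiimpl (x y : A) : A := star (biimpl x y).
Definition nbiimpl3 (x y z : A) : A :=
  otimes (otimes (nbiimpl x y) (nbiimpl x z)) (nbiimpl y z).
Definition oplus (x y : A) : A := star (otimes (star x) (star y)).
Definition supset (x y : A) : A := oplus (star x) y.
End Terms.

Inductive ext (A : Type) : Type :=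
| inA : A -> ext A
| tt_ : ext A
| ff_ : ext A.
Arguments tt_ {A}.
Arguments ff_ {A}.

Definition Nw_model (A : Type) (otimes circ : A -> A -> A) (star : A -> A)
  (perp : ext A -> ext A -> Prop) : Prop :=
  weak_N_algebra otimes circ star /\
  (* (a) *) (forall x, perp (inA x) (inA (star x))) /\
  (* (b) *) (forall x y, perp (inA x) (inA (star y)) -> perp (inA y) (inA (star x)) -> x = y) /\
  (* (c) *) (forall x y, perp (inA x) (inA y) <-> perp (inA (circ x y)) tt_) /\
  (forall x, perp (inA x) tt_ <-> perp (inA (star x)) ff_) /\
  (forall x y, (perp (inA x) ff_ /\ perp (inA y) ff_) <-> perp (inA (otimes x y)) ff_) /\
  (forall x y, perp (inA (star (circ x (star y)))) (inA (star (circ x y)))) /\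
  (forall x y, perp (inA x) (inA y) -> perp (inA x) ff_ -> perp (inA y) tt_) /\
  (forall x y z,
      perp (inA (nbiimpl3 otimes circ star x y z))
           (inA (star (impl circ star (impl circ star x y)
                         (impl circ star (impl circ star y z) (impl circ star x z)))))).

Definition Nw1_model (A : Type) (otimes circ : A -> A -> A) (star : A -> A)
  (perp : ext A -> ext A -> Prop) : Prop :=
  Nw_model otimes circ star perp /\
  (forall x y, perp (inA x) ff_ -> perp (inA (oplus otimes star x y)) ff_) /\
  (forall x y z, perp (inA x) (inA (star y)) -> perp (inA y) (inA (star z)) ->
                 perp (inA x) (inA (star z))).

Definition prec (A : Type) (star : A -> A) (perp : ext A -> ext A -> Prop) (x y : A) : Prop :=
  perp (inA x) (inA (star y)).

Definition po_comm_inv_res_groupoid (A : Type) (le : A -> A -> Prop)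
  (otimes sup : A -> A -> A) (star : A -> A) : Prop :=
  (forall x y, otimes x y = otimes y x) /\
  (forall x, le x x) /\
  (forall x y, le x y -> le y x -> x = y) /\
  (forall x y z, le x y -> le y z -> le x z) /\
  (forall x, star (star x) = x) /\
  (forall x y, le x y -> le (star y) (star x)) /\
  (forall x y z, le (otimes x y) z <-> le x (sup y z)).

From Stdlib Require Import Setoid.

(* With x ≾ y meaning x ⊥ y^*, axiom (c) reduces both sides of the residuation
   law to a statement u ⊥ t, with u = (x ⊗ y) ∘ w and u = x ∘ (y ⊗ w) for w = z^*,
   and these two terms are equal by commutativity and the exchange law.
   Together with commutativity of ∘, (c) also makes ⊥ symmetric, hence ^*
   antitone. *)

Section PrecOrder.

Variables (A : Type) (otimes circ : A -> A -> A) (star : A -> A)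
  (perp : ext A -> ext A -> Prop).

Hypothesis otimesC : forall x y, otimes x y = otimes y x.
Hypothesis circC : forall x y, circ x y = circ y x.
Hypothesis starK : forall x, star (star x) = x.
Hypothesis circ_otimes_exchange :
  forall x y z, circ (otimes x y) z = circ (otimes x z) y.
Hypothesis perp_circ_tt :
  forall x y, perp (inA x) (inA y) <-> perp (inA (circ x y)) tt_.
Hypothesis perp_star : forall x, perp (inA x) (inA (star x)).
Hypothesis perp_star_antisym : forall x y,
  perp (inA x) (inA (star y)) -> perp (inA y) (inA (star x)) -> x = y.
Hypothesis perp_star_trans : forall x y z,
  perp (inA x) (inA (star y)) -> perp (inA y) (inA (star z)) ->
  perp (inA x) (inA (star z)).

Lemma circ_otimesA (x y z : A) : circ x (otimes y z) = circ (otimes x y) z.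
Proof. rewrite circC, circ_otimes_exchange, (otimesC y x). reflexivity. Qed.

Lemma perp_sym (x y : A) : perp (inA x) (inA y) -> perp (inA y) (inA x).
Proof. rewrite !perp_circ_tt, circC. trivial. Qed.

Lemma prec_star (x y : A) :
  prec star perp x y -> prec star perp (star y) (star x).
Proof. unfold prec. rewrite starK. apply perp_sym. Qed.

Lemma prec_otimes_supset (x y z : A) :
  prec star perp (otimes x y) z <-> prec star perp x (supset otimes star y z).
Proof.
  unfold prec, supset, oplus.
  rewrite !starK, !perp_circ_tt, circ_otimesA.
  reflexivity.
Qed.

Lemma prec_po_comm_inv_res_groupoid :
  po_comm_inv_res_groupoid (prec star perp) otimes (supset otimes star) star.
Proof.
  repeat split.
  - exact otimesC.
  - exact perp_star.
  - exact perp_star_antisym.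
  - exact perp_star_trans.
  - exact starK.
  - exact prec_star.
  - apply prec_otimes_supset.
  - apply prec_otimes_supset.
Qed.

End PrecOrder.

Theorem proposition6p14 (A : Type) (otimes circ : A -> A -> A) (star : A -> A)
  (perp : ext A -> ext A -> Prop) :
  Nw1_model otimes circ star perp ->
  (forall x y z : A,
     prec star perp (otimes x y) z <-> prec star perp x (supset otimes star y z)) /\
  po_comm_inv_res_groupoid (prec star perp) otimes (supset otimes star) star.
Proof.
  intros [[[otimesC [circC [starK exchange]]]
           [perp_star [perp_star_antisym [perp_circ_tt _]]]]
          [_ perp_star_trans]].
  split.
  - intros x y z. eapply prec_otimes_supset; eassumption.
  - eapply prec_po_comm_inv_res_groupoid; eassumption.
Qed.
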